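(* Let $(G,\Phi)$ be a self-replicating contracting self-similar group of degree $d$ with $G$ finitely generated, and let $G_0=G_0^{un}/H$ be a standard contracting cover with epimorphism $\pi:G_0\to G$ induced by $\pi^{un}$. Then $\varphi^{un}$ induces a homomorphism $\varphi_1:G_0\to G_0\wr S_d$ such that the self-similar group $(G_0,\varphi_1)$ is contracting and self-replicating with nucleus (the image of) $S$, and $\widehat\pi\circ\varphi_1=\Phi\circ\pi$, where $\widehat\pi:G_0\wr S_d\to G\wr S_d$, $((k_x)_{x\in X},\tau)\mapsto((\pi(k_x))_{x\in X},\tau)$.
   Context: Self-similar groups: fix $d\ge 2$, $X=\{0,\dots,d-1\}$, $S_d$ the symmetric group of $X$ acting from the right. $G\wr S_d=G^X\rtimes S_d$ has elements $((g_x)_{x\in X},\tau)$ and product $((g_x),\tau)((g'_x),\tau')=((g_xg'_{x\tau}),\tau\tau')$. A self-similar group of degree $d$ is $(G,\Phi)$ with $\Phi:G\to G\wr S_d$ a homomorphism, $\Phi(g)=((g_x)_x,\tau_g)$. On the set $X^*$ of finite words, define a right action and sections by: empty word fixed, $(xw)g=(x\tau_g)(w\,g_x)$, $g_\emptyset=g$, $g_{xw}=(g_x)_w$. Contracting: there is finite $\mathcal M\subset G$ such that every $g$ has $g_v\in\mathcal M$ for all $v$ of length $\ge k(g)$; the nucleus $\mathcal N$ is the smallest such set. Self-replicating: for all $g\in G$, $x\in X$ there is $h$ with $xh=x$, $h_x=g$. Universal contracting cover: $\mathcal N=\{n_1,\dots,n_\ell\}$, $\Phi(n_i)=((n_{i(x)})_x,\tau_i)$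 (sections of nucleus elements are in $\mathcal N$); $S=\{s_1,\dots,s_\ell\}$; $R$ = words $s_i$ (if $n_i=1$), $s_is_j$ (if $n_in_j=1$), $s_is_js_k$ (if $n_in_jn_k=1$); $G_0^{un}=\langle S\mid R\rangle$, $\pi^{un}(s_i)=n_i$ (an epimorphism); $\varphi^{un}:G_0^{un}\to G_0^{un}\wr S_d$ the homomorphism extending $s_i\mapsto((s_{i(x)})_x,\tau_i)$. Standard contracting cover: for $x\in X$, $n_i\in\mathcal N$ choose $g(x,n_i)\in G$ with $x\,g(x,n_i)=x$, $g(x,n_i)_x=n_i$; choose $h(x,n_i)\in G_0^{un}$ with $\pi^{un}(h(x,n_i))=g(x,n_i)$; put $w(x,n_i)=h(x,n_i)_xs_i^{-1}$ (section w.r.t. $\varphi^{un}$); $E=\{w(x,n_i)_v:x\in X,n_i\in\mathcal N,v\in X^*\}$ (finite); $H$ = normal closure of $E$ in $G_0^{un}$; $G_0=G_0^{un}/H$. *)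

(* ordinals 'I_d for the alphabet X, {perm 'I_d} for S_d.
   Abstract (possibly infinite) groups are given by an explicit record. *)
From HB Require Import structures.
From mathcomp Require Import all_boot all_order all_fingroup.
From Stdlib Require List.
Set Implicit Arguments. Unset Strict Implicit. Unset Printing Implicit Defensive.

Record Grp := {
  gcar :> Type;
  gmul : gcar -> gcar -> gcar;
  ginv : gcar -> gcar;
  gone : gcar;
  gmulA : forall a b c, gmul a (gmul b c) = gmul (gmul a b) c;
  gmul1 : forall a, gmul gone a = a;
  gmulV : forall a, gmul (ginv a) a = gone }.

Definition gword_eval (G : Grp) (w : seq (G * bool)) : G :=
  foldr (fun a g => gmul (if a.2 then ginv a.1 else a.1) g) (gone G) w.

Definition fin_gen (G : Grp) : Prop :=
  exists gens : seq G, forall g : G, exists w : seq (G * bool),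
    (forall a, List.In a w -> List.In a.1 gens) /\ g = gword_eval w.

Section SelfSimilar.
Variables (G : Grp) (d : nat).
(* Phi g = ((g_x)_x, tau_g); S_d acts on the right: x tau = tau x,
   and (tau * tau')%g x = tau' (tau x) in MathComp, i.e. tau first. *)
Variable Phi : G -> ('I_d -> G) * {perm 'I_d}.

(* Phi is a homomorphism G -> G wr S_d with the product
   ((g_x),tau)((g'_x),tau') = ((g_x g'_{x tau}), tau tau'). *)
Definition is_ss_hom : Prop :=
  forall g h : G,
    (Phi (gmul g h)).2 = ((Phi g).2 * (Phi h).2)%g /\
    forall x, (Phi (gmul g h)).1 x = gmul ((Phi g).1 x) ((Phi h).1 ((Phi g).2 x)).

Definition sect (g : G) (v : seq 'I_d) : G := foldl (fun h x => (Phi h).1 x) g v.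

Definition contracting_set (M : seq G) : Prop :=
  forall g, exists k, forall v : seq 'I_d, k <= size v -> List.In (sect g v) M.

Definition contracting : Prop := exists M, contracting_set M.

Definition is_nucleus (N : seq G) : Prop :=
  contracting_set N /\
  forall M, contracting_set M -> forall n, List.In n N -> List.In n M.

Definition self_replicating : Prop :=
  forall (g : G) (x : 'I_d), exists h, (Phi h).2 x = x /\ (Phi h).1 x = g.

Variable l : nat.
Variable nuc : 'I_l -> G.
Variable idx : 'I_l -> 'I_d -> 'I_l.       (* i(x): (n_i)_x = n_{i(x)} *)

(* words in the free group on S = {s_1..s_l}: (i,false) = s_i, (i,true) = s_i^-1 *)
Definition letter := ('I_l * bool)%type.
Definition word := seq letter.

Definition tau (i : 'I_l) : {perm 'I_d} := (Phi (nuc i)).2.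

Definition lperm (a : letter) : {perm 'I_d} :=
  if a.2 then ((tau a.1)^-1)%g else tau a.1.

(* sections of phi^un(s_i^{+-1}) at x *)
Definition lsec (a : letter) (x : 'I_d) : word :=
  if a.2 then [:: (idx a.1 (((tau a.1)^-1)%g x), true)] else [:: (idx a.1 x, false)].

(* phi^un on words (computed via the wreath product rule) *)
Definition wperm (w : word) : {perm 'I_d} := foldr (fun a p => (lperm a * p)%g) 1%g w.

Fixpoint wsec (w : word) (x : 'I_d) : word :=
  match w with
  | [::] => [::]
  | a :: w' => lsec a x ++ wsec w' (lperm a x)
  end.

Definition wsecv (w : word) (v : seq 'I_d) : word := foldl wsec w v.

Definition leval (a : letter) : G := if a.2 then ginv (nuc a.1) else nuc a.1.
Definition weval (w : word) : G := foldr (fun a g => gmul (leval a) g) (gone G) w.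

Definition is_relator (r : word) : Prop :=
  (exists i, r = [:: (i, false)] /\ nuc i = gone G) \/
  (exists i j, r = [:: (i, false); (j, false)] /\ gmul (nuc i) (nuc j) = gone G) \/
  (exists i j k, r = [:: (i, false); (j, false); (k, false)] /\
                 gmul (gmul (nuc i) (nuc j)) (nuc k) = gone G).

Variable h : 'I_d -> 'I_l -> word.

Definition wE (x : 'I_d) (i : 'I_l) : word := wsec (h x i) x ++ [:: (i, true)].

(* equality in G_0 = <S | R> / <<E>>, E = { w(x,n_i)_v }: the congruence on
   words generated by free cancellation, the relators and the elements of E *)
Inductive g0eq : word -> word -> Prop :=
  | g0_refl w : g0eq w w
  | g0_sym w w' : g0eq w w' -> g0eq w' w
  | g0_trans w1 w2 w3 : g0eq w1 w2 -> g0eq w2 w3 -> g0eq w1 w3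
  | g0_cancel (a b : word) (i : 'I_l) (e : bool) :
      g0eq (a ++ [:: (i, e); (i, ~~ e)] ++ b) (a ++ b)
  | g0_rel (a b r : word) : is_relator r -> g0eq (a ++ r ++ b) (a ++ b)
  | g0_E (a b : word) (x : 'I_d) (i : 'I_l) (v : seq 'I_d) :
      g0eq (a ++ wsecv (wE x i) v ++ b) (a ++ b).

Definition g0_contracting_set (M : seq word) : Prop :=
  forall g : word, exists k, forall v : seq 'I_d, k <= size v ->
    exists m, List.In m M /\ g0eq (wsecv g v) m.

Definition Simg : seq word := [seq [:: (i, false)] | i <- enum 'I_l].

End SelfSimilar.

From HB Require Import structures.
From mathcomp Require Import all_boot all_order all_fingroup.
From Stdlib Require List.
Set Implicit Arguments. Unset Strict Implicit. Unset Printing Implicit Defensive.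

(* Elements of G_0 are represented by
   words in the letters s_i^{+-1}; phi^un is computed on words by [wperm] and
   [wsec], and pi^un by [weval].
   1. Phi sends 1 and inverses to 1 and inverses of G wr S_d; from this and
      induction on words, pihat o phi^un = Phi o pi^un ([pi_phi]).
   2. pi^un kills R and E, so it factors through G_0 ([g0_weval]); hence so does
      the permutation part of phi^un.  R and E are closed under sections, so the
      section part of phi^un also factors through G_0 ([g0_sec]): phi_1 exists.
   3. Self-replication: modulo E, h(x,n_i) has section s_i at x ([g0_self_replicating]).
   4. In G the nucleus contains 1, is closed under inverses, and each n_i is a
      section of some n_j at words of any prescribed length (all by minimality).
   5. Contraction: a two-letter word with value n_i equals s_i in G_0 (relators of
      length 2 and 3); a uniform bound over the finitely many such pairs gives, by
      induction on words, that long sections of any word are generators.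
   6. Minimality of the image of S follows from 4 and injectivity of n. *)

Section GroupFacts.
Variable G : Grp.

Lemma gmulVr (a : G) : gmul a (ginv a) = gone G.
Proof.
rewrite -[in LHS](gmul1 (gmul a (ginv a))) -[in X in gmul X _](gmulV (ginv a)).
by rewrite -gmulA [gmul (ginv a) _]gmulA gmulV gmul1 gmulV.
Qed.

Lemma gmulr1 (a : G) : gmul a (gone G) = a.
Proof. by rewrite -(gmulV a) gmulA gmulVr gmul1. Qed.

Lemma gidem (p : G) : gmul p p = p -> p = gone G.
Proof. by move=> pp; rewrite -(gmulV p) -{3}pp gmulA gmulV gmul1. Qed.

Lemma ginv_uniq (a b : G) : gmul a b = gone G -> a = ginv b.
Proof. by move=> ab; rewrite -(gmulr1 a) -(gmulVr b) gmulA ab gmul1. Qed.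

Lemma ginvK (a : G) : ginv (ginv a) = a.
Proof. by apply/esym/ginv_uniq/gmulVr. Qed.
End GroupFacts.

Lemma in_List_In (T : eqType) (x : T) (s : seq T) : x \in s -> List.In x s.
Proof. by elim: s => //= a s IH; rewrite in_cons => /orP [/eqP ->|/IH]; [left|right]. Qed.

Lemma uniform_bound (T : eqType) (s : seq T) (P : T -> nat -> Prop) :
  (forall t k k', k <= k' -> P t k -> P t k') -> (forall t, exists k, P t k) ->
  exists K, forall t, t \in s -> P t K.
Proof.
move=> Pmono Pex; elim: s => [|a s [K HK]]; first by exists 0.
have [ka Ha] := Pex a; exists (maxn ka K) => t; rewrite in_cons => /orP [/eqP ->|st].
  by apply: Pmono Ha; apply: leq_maxl.
by apply: Pmono (HK t st); apply: leq_maxr.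
Qed.

Section StandardCover.
Variables (G : Grp) (d : nat) (Phi : G -> ('I_d -> G) * {perm 'I_d}).
Variables (l : nat) (nuc : 'I_l -> G) (idx : 'I_l -> 'I_d -> 'I_l).
Variable h : 'I_d -> 'I_l -> word l.

Hypothesis Phi_hom : is_ss_hom Phi.
Hypothesis nuc_sect : forall i x, (Phi (nuc i)).1 x = nuc (idx i x).
Hypothesis h_spec : forall x i, (Phi (weval nuc (h x i))).2 x = x /\
                                (Phi (weval nuc (h x i))).1 x = nuc i.

Local Notation wsec := (wsec Phi nuc idx).
Local Notation wsecv := (wsecv Phi nuc idx).
Local Notation wperm := (wperm Phi nuc).
Local Notation weval := (weval nuc).
Local Notation lperm := (lperm Phi nuc).
Local Notation lsec := (lsec Phi nuc idx).
Local Notation g0eq := (g0eq Phi nuc idx h).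
Local Notation sect := (sect Phi).

Lemma Phi1_perm : (Phi (gone G)).2 = 1%g.
Proof.
have [E _] := Phi_hom (gone G) (gone G); rewrite gmul1 in E.
by apply: (@mulgI _ (Phi (gone G)).2); rewrite mulg1 -E.
Qed.

Lemma Phi1_sec x : (Phi (gone G)).1 x = gone G.
Proof.
have [_ E] := Phi_hom (gone G) (gone G).
apply: gidem; move: (E x).
by rewrite gmul1 Phi1_perm perm1 => <-.
Qed.

Lemma PhiV_perm g : (Phi (ginv g)).2 = ((Phi g).2)^-1%g.
Proof.
have [E _] := Phi_hom (ginv g) g; rewrite gmulV Phi1_perm in E.
by rewrite -[LHS](mulgK (Phi g).2) -E mul1g.
Qed.

Lemma PhiV_sec g y : (Phi (ginv g)).1 y = ginv ((Phi g).1 (((Phi g).2)^-1%g y)).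
Proof.
have [_ E] := Phi_hom (ginv g) g; apply: ginv_uniq.
by rewrite -PhiV_perm -E gmulV Phi1_sec.
Qed.

Lemma sect1 v : sect (gone G) v = gone G.
Proof. by elim: v => //= x v IH; rewrite Phi1_sec. Qed.

Lemma sectV g v : exists v', size v' = size v /\ sect (ginv g) v' = ginv (sect g v).
Proof.
elim: v g => [|x v IH] g; first by exists [::].
have [v' [size_v' E]] := IH ((Phi g).1 x).
exists ((Phi g).2 x :: v'); split; first by rewrite /= size_v'.
by rewrite /sect /= PhiV_sec permK.
Qed.

Lemma weval_cat u v : weval (u ++ v) = gmul (weval u) (weval v).
Proof. by elim: u => [|a u IH] /=; rewrite ?gmul1 // /weval /= -gmulA -IH. Qed.

Lemma wperm_cat u v : wperm (u ++ v) = (wperm u * wperm v)%g.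
Proof. by elim: u => [|a u IH]; rewrite ?mul1g // /wperm /= -mulgA -IH. Qed.

Lemma wsec_cat u v x : wsec (u ++ v) x = wsec u x ++ wsec v (wperm u x).
Proof.
elim: u x => [|a u IH] x /=; first by rewrite /wperm /= perm1.
by rewrite IH catA /wperm /= permM.
Qed.

Lemma pi_phi_letter a : (Phi (leval nuc a)).2 = lperm a /\
  forall x, (Phi (leval nuc a)).1 x = weval (lsec a x).
Proof.
case: a => i [] /=; rewrite /leval /lperm /lsec /tau /weval /=.
  by split=> [|x]; rewrite ?PhiV_perm ?PhiV_sec ?nuc_sect ?gmulr1.
by split=> [|x]; rewrite ?nuc_sect ?gmulr1.
Qed.

Lemma pi_phi w : (Phi (weval w)).2 = wperm w /\
  forall x, (Phi (weval w)).1 x = weval (wsec w x).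
Proof.
elim: w => [|a w [IHp IHs]]; first by split=> [|x]; rewrite ?Phi1_perm ?Phi1_sec.
have [Lp Ls] := pi_phi_letter a.
have [Ep Es] := Phi_hom (leval nuc a) (weval w).
split=> [|x]; rewrite /weval /= -/(weval w); first by rewrite Ep Lp IHp.
by rewrite Es Lp Ls IHs -weval_cat.
Qed.

Lemma weval_wsecv w v : weval (wsecv w v) = sect (weval w) v.
Proof.
elim: v w => [|x v IH] w //=.
by rewrite /wsecv /= -/(wsecv _ v) IH /sect /= (proj2 (pi_phi w) x).
Qed.

Lemma g0_ctx u u' a b : g0eq u u' -> g0eq (a ++ u ++ b) (a ++ u' ++ b).
Proof.
move=> H; elim: H a b => {u u'}.
- by move=> *; apply: g0_refl.
- by move=> w w' _ IH a b; apply: g0_sym.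
- by move=> w1 w2 w3 _ IH1 _ IH2 a b; apply: g0_trans (IH1 a b) (IH2 a b).
- move=> a0 b0 i e a b.
  by have := g0_cancel Phi nuc idx h (a ++ a0) (b0 ++ b) i e; rewrite -!catA.
- move=> a0 b0 r rel_r a b.
  by have := g0_rel Phi idx h (a ++ a0) (b0 ++ b) rel_r; rewrite -!catA.
- move=> a0 b0 x i v a b.
  by have := g0_E Phi nuc idx h (a ++ a0) (b0 ++ b) x i v; rewrite -!catA.
Qed.

Lemma g0_cat u u' v v' : g0eq u u' -> g0eq v v' -> g0eq (u ++ v) (u' ++ v').
Proof.
move=> Hu Hv; apply: g0_trans (_ : g0eq (u' ++ v) _); first exact: g0_ctx [::] v Hu.
by have := g0_ctx u' [::] Hv; rewrite !cats0.
Qed.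

Lemma g0_cancel0 i e : g0eq [:: (i, e); (i, ~~ e)] [::].
Proof. by have := g0_cancel Phi nuc idx h [::] [::] i e. Qed.

Lemma g0_relator r : is_relator nuc r -> g0eq r [::].
Proof. by move=> rel_r; have := g0_rel Phi idx h [::] [::] rel_r; rewrite /= cats0. Qed.

Lemma g0_E0 x i v : g0eq (wsecv (wE Phi nuc idx h x i) v) [::].
Proof. by have := g0_E Phi nuc idx h [::] [::] x i v; rewrite /= cats0. Qed.

Lemma weval_relator r : is_relator nuc r -> weval r = gone G.
Proof.
rewrite /weval; case=> [[i [-> E]]|[[i [j [-> E]]]|[i [j [k [-> E]]]]]] /=;
  by rewrite ?gmulr1 ?gmulA.
Qed.

Lemma weval_wE x i : weval (wE Phi nuc idx h x i) = gone G.
Proof.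
rewrite /wE weval_cat -(proj2 (pi_phi (h x i)) x) (proj2 (h_spec x i)).
by rewrite /weval /= gmulr1 gmulVr.
Qed.

Lemma weval_cancel i e : weval [:: (i, e); (i, ~~ e)] = gone G.
Proof. by case: e; rewrite /weval /= gmulr1 ?gmulV ?gmulVr. Qed.

Lemma g0_weval w w' : g0eq w w' -> weval w = weval w'.
Proof.
elim=> [//|w1 w2 _ -> //|w1 w2 w3 _ -> _ -> //|a b i e|a b r rel_r|a b x i v];
  rewrite !weval_cat.
- by rewrite weval_cancel gmul1.
- by rewrite (weval_relator rel_r) gmul1.
- by rewrite weval_wsecv weval_wE sect1 gmul1.
Qed.

Lemma wperm_pi w : wperm w = (Phi (weval w)).2.
Proof. by rewrite (proj1 (pi_phi w)). Qed.

Lemma g0_wperm w w' : g0eq w w' -> wperm w = wperm w'.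
Proof. by move=> H; rewrite !wperm_pi (g0_weval H). Qed.

Lemma relator_sec r y : is_relator nuc r -> is_relator nuc (wsec r y).
Proof.
case=> [[i [-> E]]|[[i [j [-> E]]]|[i [j [k [-> E]]]]]] /=.
- by left; exists (idx i y); split => //; rewrite -nuc_sect E Phi1_sec.
- right; left; exists (idx i y), (idx j (tau Phi nuc i y)); split => //.
  by have [_ Es] := Phi_hom (nuc i) (nuc j); rewrite -!nuc_sect -Es E Phi1_sec.
- right; right; exists (idx i y), (idx j (tau Phi nuc i y)),
    (idx k (tau Phi nuc j (tau Phi nuc i y))); split => //.
  have [Ep Es] := Phi_hom (nuc i) (nuc j).
  have [_ Es'] := Phi_hom (gmul (nuc i) (nuc j)) (nuc k).
  by rewrite -!nuc_sect -Es /tau -permM -Ep -Es' E Phi1_sec.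
Qed.

(* Deleting a trivial subword r whose sections are all trivial in G_0 does not
   change sections in G_0: the permutation of r is trivial. *)
Lemma g0_sec_delete a b r x : weval r = gone G -> (forall y, g0eq (wsec r y) [::]) ->
  g0eq (wsec (a ++ r ++ b) x) (wsec (a ++ b) x).
Proof.
move=> r1 sec_r; rewrite !wsec_cat (wperm_pi r) r1 Phi1_perm perm1.
exact: g0_ctx (wsec a x) (wsec b (wperm a x)) (sec_r (wperm a x)).
Qed.

Lemma g0_sec w w' : g0eq w w' -> forall x, g0eq (wsec w x) (wsec w' x).
Proof.
elim=> {w w'}.
- by move=> *; apply: g0_refl.
- by move=> w w' _ IH x; apply: g0_sym.
- by move=> w1 w2 w3 _ IH1 _ IH2 x; apply: g0_trans (IH1 x) (IH2 x).
- move=> a b i e x; apply: g0_sec_delete; first exact: weval_cancel.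
  move=> y; case: e; rewrite /= /lperm /lsec /=; last rewrite permK;
    exact: g0_cancel0.
- move=> a b r rel_r x; apply: g0_sec_delete; first exact: weval_relator.
  by move=> y; apply/g0_relator/relator_sec.
- move=> a b x0 i v x; apply: g0_sec_delete.
    by rewrite weval_wsecv weval_wE sect1.
  by move=> y; rewrite /wsecv -foldl_rcons; apply: g0_E0.
Qed.

Lemma g0_wsecv u u' v : g0eq u u' -> g0eq (wsecv u v) (wsecv u' v).
Proof. by elim: v u u' => [|x v IH] u u' H //=; apply/IH/g0_sec. Qed.

Definition linv (a : letter l) : letter l := (a.1, ~~ a.2).
Definition winv (w : word l) : word l := rev (map linv w).

Lemma winv_cons a w : winv (a :: w) = winv w ++ [:: linv a].
Proof. by rewrite /winv /= rev_cons cats1. Qed.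

Lemma wperm_winv w : wperm (winv w) = (wperm w)^-1%g.
Proof.
elim: w => [|a w IH]; first by rewrite /wperm /= invg1.
rewrite winv_cons wperm_cat IH /wperm /= mulg1 invMg.
by case: a => i []; rewrite /lperm /= ?invgK.
Qed.

Lemma wsec_winv w x : wsec (winv w) x = winv (wsec w ((wperm w)^-1%g x)).
Proof.
elim: w x => [|a w IH] x //.
rewrite winv_cons wsec_cat IH wperm_winv /= cats0 invMg permM permKV.
rewrite /winv map_cat rev_cat; congr (_ ++ _).
by case: a => i []; rewrite /lsec /lperm /= ?invgK ?permK.
Qed.

Lemma g0_winvK u b : g0eq (winv u ++ u ++ b) b.
Proof.
elim: u => [|c u IH]; first exact: g0_refl.
rewrite winv_cons -catA; apply: g0_trans IH.
have := g0_cancel Phi nuc idx h (winv u) (u ++ b) c.1 (~~ c.2).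
by rewrite negbK; case: c.
Qed.

(* Self-replication for a single letter: h(x,n_i) has section s_i at x in G_0
   (since w(x,n_i) is in E), and its formal inverse has section s_i^-1. *)
Lemma self_replicating_letter (x : 'I_d) (a : letter l) :
  exists k, wperm k x = x /\ g0eq (wsec k x) [:: a].
Proof.
case: a => i e.
have fix_x : wperm (h x i) x = x by rewrite wperm_pi (proj1 (h_spec x i)).
have fixV_x : ((wperm (h x i))^-1)%g x = x.
  by apply: (@perm_inj _ (wperm (h x i))); rewrite permKV fix_x.
have E_x : g0eq (wsec (h x i) x ++ [:: (i, true)]) [::] := g0_E0 x i [::].
case: e.
  exists (winv (h x i)); split; first by rewrite wperm_winv fixV_x.
  rewrite wsec_winv fixV_x.
  apply: g0_trans (_ : g0eq (winv (wsec (h x i) x) ++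
                    (wsec (h x i) x ++ [:: (i, true)])) _).
    by have := g0_ctx (winv (wsec (h x i) x)) [::] (g0_sym E_x); rewrite !cats0.
  exact: g0_winvK.
exists (h x i); split => //.
apply: g0_trans (_ : g0eq ((wsec (h x i) x ++ [:: (i, true)]) ++ [:: (i, false)]) _).
  apply: g0_sym; rewrite -catA.
  by have := g0_cancel Phi nuc idx h (wsec (h x i) x) [::] i true; rewrite cats0.
exact: g0_cat E_x (g0_refl _ _ _ _ [:: (i, false)]).
Qed.

(* (G_0, phi_1) is self-replicating: concatenate the single-letter witnesses. *)
Lemma g0_self_replicating (g : word l) (x : 'I_d) :
  exists k, wperm k x = x /\ g0eq (wsec k x) g.
Proof.
elim: g => [|a g [k [fix_k sec_k]]].
  by exists [::]; split; [rewrite /wperm /= perm1 | apply: g0_refl].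
have [ka [fix_ka sec_ka]] := self_replicating_letter x a.
exists (ka ++ k); split; first by rewrite wperm_cat permM fix_ka fix_k.
by rewrite wsec_cat fix_ka; apply: g0_cat sec_ka sec_k.
Qed.

Variable x0 : 'I_d.
Hypothesis nuc_inj : injective nuc.
Hypothesis nuc_nucleus : is_nucleus Phi [seq nuc i | i <- enum 'I_l].

Local Notation N := [seq nuc i | i <- enum 'I_l].

Lemma inN g : List.In g N <-> exists i, nuc i = g.
Proof.
rewrite List.in_map_iff; split; first by case=> i [E _]; exists i.
by case=> i E; exists i; split=> //; apply: in_List_In; rewrite mem_enum.
Qed.

(* The identity lies in the nucleus: it is its own section at every word. *)
Lemma nucleus_one : exists m, nuc m = gone G.
Proof.
have [k Hk] := proj1 nuc_nucleus (gone G).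
have /inN [m E] := Hk (nseq k x0) (eq_leq (esym (size_nseq k x0))).
by exists m; rewrite E sect1.
Qed.

(* The nucleus is closed under inverses, by minimality: its inverses form a
   contracting set. *)
Lemma nucleus_inv i : exists j, gmul (nuc i) (nuc j) = gone G.
Proof.
set M := map (@ginv G) N.
have contr_M : contracting_set Phi M.
  move=> g; have [k Hk] := proj1 nuc_nucleus (ginv g); exists k => v Hv.
  have [v' [size_v' E]] := sectV g v.
  have /inN [j Ej] : List.In (sect (ginv g) v') N by apply: Hk; rewrite size_v'.
  by apply/List.in_map_iff; exists (nuc j); split; [rewrite Ej E ginvK | apply/inN; exists j].
have /List.in_map_iff [n [En /inN [j Ej]]] :=
  proj2 nuc_nucleus M contr_M (nuc i) (proj2 (inN _) (ex_intro _ i erefl)).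
by exists j; rewrite -En -Ej gmulV.
Qed.

Definition words_of_size (k : nat) : seq (seq 'I_d) :=
  [seq val t | t <- enum {: k.-tuple 'I_d}].

Lemma words_of_sizeP k v : List.In v (words_of_size k) <-> size v = k.
Proof.
rewrite List.in_map_iff; split; first by case=> t [<- _]; apply: size_tuple.
move=> size_v; exists (Tuple (introT eqP size_v)); split=> //.
by apply: in_List_In; rewrite mem_enum.
Qed.

(* Sections of nucleus elements at words of length k form a contracting set, so
   every nucleus element is such a section. *)
Definition sections_of_size (k : nat) : seq G :=
  List.flat_map (fun n => map (sect n) (words_of_size k)) N.

Lemma sections_of_size_contracting k : contracting_set Phi (sections_of_size k).
Proof.
move=> g; have [k0 Hk0] := proj1 nuc_nucleus g; exists (k0 + k) => v Hv.
have le_k : k <= size v by apply: leq_trans Hv; apply: leq_addl.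
rewrite -(cat_take_drop (size v - k) v) /sect foldl_cat -/(sect _ _) -/(sect _ _).
apply/List.in_flat_map; exists (sect g (take (size v - k) v)); split.
  by apply: Hk0; rewrite size_takel ?leq_subr // leq_subRL // addnC.
by apply/List.in_map/words_of_sizeP; rewrite size_drop subKn.
Qed.

Lemma nucleus_sect_of_size k i : exists j v, size v = k /\ sect (nuc j) v = nuc i.
Proof.
have := proj2 nuc_nucleus _ (sections_of_size_contracting k) (nuc i)
  (proj2 (inN _) (ex_intro _ i erefl)).
case/List.in_flat_map=> n [/inN [j <-] /List.in_map_iff [v [E /words_of_sizeP S]]].
by exists j, v.
Qed.

(* Every letter equals a generator s_p in G_0: s_i^-1 = s_j when n_i n_j = 1. *)
Lemma letter_generator a : exists p, g0eq [:: a] [:: (p, false)] /\ nuc p = leval nuc a.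
Proof.
case: a => i [] /=; last by exists i; split=> //; apply: g0_refl.
have [j Ej] := nucleus_inv i.
exists j; split; last by rewrite /leval /= (ginv_uniq Ej) ginvK.
have rel_ij : is_relator nuc [:: (i, false); (j, false)] by right; left; exists i, j.
apply: g0_trans (_ : g0eq [:: (i, true); (i, false); (j, false)] _).
  exact: g0_sym (g0_ctx [:: (i, true)] [::] (g0_relator rel_ij)).
exact: g0_ctx [::] [:: (j, false)] (g0_cancel0 i true).
Qed.

(* A two-letter word whose value is the nucleus element n_i equals s_i in G_0,
   by a relator of length 2 (n_i' n_i = 1) and one of length 3 (n_p n_q n_i' = 1). *)
Lemma pair_reduce b c i : weval [:: b; c] = nuc i -> g0eq [:: b; c] [:: (i, false)].
Proof.
move=> bc_i.
have [p [Hp Ep]] := letter_generator b; have [q [Hq Eq]] := letter_generator c.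
have [i' Ei] := nucleus_inv i.
have rel_i'i : is_relator nuc [:: (i', false); (i, false)].
  by right; left; exists i', i; rewrite (ginv_uniq Ei) gmulVr.
have rel_pqi' : is_relator nuc [:: (p, false); (q, false); (i', false)].
  right; right; exists p, q, i'; split=> //.
  by move: bc_i; rewrite /weval /= gmulr1 -Ep -Eq => ->.
apply: g0_trans (_ : g0eq [:: (p, false); (q, false)] _); first exact: g0_cat Hp Hq.
apply: g0_trans (_ : g0eq [:: (p, false); (q, false); (i', false); (i, false)] _).
  exact: g0_sym (g0_ctx [:: (p, false); (q, false)] [::] (g0_relator rel_i'i)).
exact: g0_ctx [::] [:: (i, false)] (g0_relator rel_pqi').
Qed.

Lemma size_wsec w x : size (wsec w x) = size w.
Proof. by elim: w x => [|[i []] w IH] x //=; rewrite IH. Qed.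

Lemma size_wsecv w v : size (wsecv w v) = size w.
Proof. by elim: v w => [|x v IH] w //=; rewrite /wsecv /= -/(wsecv _ v) IH size_wsec. Qed.

Lemma wsecv_nil v : wsecv [::] v = [::].
Proof. by elim: v. Qed.

Fixpoint vact (u : word l) (v : seq 'I_d) : seq 'I_d :=
  if v is x :: v' then wperm u x :: vact (wsec u x) v' else [::].

Lemma size_vact u v : size (vact u v) = size v.
Proof. by elim: v u => [|x v IH] u //=; rewrite IH. Qed.

Lemma wsecv_cat u w v : wsecv (u ++ w) v = wsecv u v ++ wsecv w (vact u v).
Proof. by elim: v u w => [|x v IH] u w //=; rewrite /wsecv /= -!/(wsecv _ v) wsec_cat IH. Qed.

Definition gen_sections (w : word l) (k : nat) : Prop :=
  forall v, k <= size v -> exists i, g0eq (wsecv w v) [:: (i, false)].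

Lemma gen_sections_mono w k k' : k <= k' -> gen_sections w k -> gen_sections w k'.
Proof. by move=> le_kk' H v Hv; apply: H; apply: leq_trans Hv. Qed.

(* Two-letter words: their long sections are two-letter words with values in the
   nucleus of G, hence generators by [pair_reduce]. *)
Lemma gen_sections_pair b c : exists k, gen_sections [:: b; c] k.
Proof.
have [k Hk] := proj1 nuc_nucleus (weval [:: b; c]); exists k => v Hv.
have /inN [i Ei] := Hk v Hv.
exists i; move: (size_wsecv [:: b; c] v) (weval_wsecv [:: b; c] v).
case: (wsecv [:: b; c] v) => [|b' [|c' [|]]] //= _ E.
by apply: pair_reduce; rewrite Ei -E.
Qed.

(* All words, by induction: a section of a :: g at a long word is, in G_0,
   a letter times a generator; a further long section of that pair is a
   generator, with a bound uniform over the finitely many such pairs. *)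
Lemma gen_sections_all g : exists k, gen_sections g k.
Proof.
have [K2 HK2] := @uniform_bound _ (enum {: letter l * 'I_l})
  (fun t k => gen_sections [:: t.1; (t.2, false)] k)
  (fun t => @gen_sections_mono _) (fun t => gen_sections_pair _ _).
elim: g => [|a g [k1 Hk1]].
  have [m0 Em0] := nucleus_one.
  exists 0 => v _; exists m0; rewrite wsecv_nil.
  by apply/g0_sym/g0_relator; left; exists m0.
exists (k1 + K2) => v Hv.
have le_k1 : k1 <= size v by apply: leq_trans Hv; apply: leq_addr.
rewrite -(cat_take_drop k1 v) /wsecv foldl_cat -/(wsecv _ _) -/(wsecv _ _) -cat1s.
rewrite wsecv_cat.
have [m Hm] : exists m, g0eq (wsecv g (vact [:: a] (take k1 v))) [:: (m, false)].
  by apply: Hk1; rewrite size_vact size_takel.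
move: (size_wsecv [:: a] (take k1 v)).
case: (wsecv [:: a] (take k1 v)) => [|b [|]] //= _.
have [i Hi] : exists i, g0eq (wsecv [:: b; (m, false)] (drop k1 v)) [:: (i, false)].
  by apply: (HK2 (b, m)); [rewrite mem_enum | rewrite size_drop leq_subRL // addnC].
exists i; apply: g0_trans Hi.
exact: g0_wsecv (g0_cat (g0_refl _ _ _ _ [:: b]) Hm).
Qed.

Lemma Simg_contracting : g0_contracting_set Phi nuc idx h (Simg l).
Proof.
move=> g; have [k Hk] := gen_sections_all g.
exists k => v Hv; have [i Hi] := Hk v Hv.
exists [:: (i, false)]; split=> //.
by apply/List.in_map_iff; exists i; split=> //; apply: in_List_In; rewrite mem_enum.
Qed.

Lemma wsecv_generator j v : exists j', wsecv [:: (j, false)] v = [:: (j', false)] /\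
  nuc j' = sect (nuc j) v.
Proof.
elim: v j => [|x v IH] j /=; first by exists j.
have [j' [E1 E2]] := IH (idx j x); exists j'.
by rewrite /wsecv /= -/(wsecv _ v) E1 /sect /= nuc_sect.
Qed.

(* Minimality: a contracting set M of G_0 contains, up to equality in G_0, all
   sections of generators at words of some length K; by [nucleus_sect_of_size]
   and injectivity of n, every s_i is such a section. *)
Lemma Simg_minimal M : g0_contracting_set Phi nuc idx h M ->
  forall s, List.In s (Simg l) -> exists m, List.In m M /\ g0eq s m.
Proof.
move=> contr_M s /List.in_map_iff [i [<- _]].
have [K HK] := @uniform_bound _ (enum 'I_l)
  (fun j k => forall v, k <= size v -> exists m, List.In m M /\
      g0eq (wsecv [:: (j, false)] v) m)
  (fun j k k' le_kk' H v Hv => H v (leq_trans le_kk' Hv)) (fun j => contr_M [:: (j, false)]).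
have [j [v [size_v Ev]]] := nucleus_sect_of_size K i.
have [j' [E1 E2]] := wsecv_generator j v.
have -> : i = j' by apply: nuc_inj; rewrite E2 Ev.
by rewrite -E1; apply: HK; rewrite ?mem_enum ?size_v.
Qed.
End StandardCover.

Theorem mainTheorem3 (G : Grp) (d : nat)
  (Phi : G -> ('I_d -> G) * {perm 'I_d})
  (l : nat) (nuc : 'I_l -> G) (idx : 'I_l -> 'I_d -> 'I_l)
  (h : 'I_d -> 'I_l -> word l) :
  2 <= d ->
  is_ss_hom Phi ->
  contracting Phi ->
  self_replicating Phi ->
  fin_gen G ->
  (* n_1, ..., n_l is an enumeration (without repetition) of the nucleus *)
  injective nuc ->
  is_nucleus Phi [seq nuc i | i <- enum 'I_l] ->
  (forall i x, (Phi (nuc i)).1 x = nuc (idx i x)) ->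
  (* h(x,n_i) maps under pi^un to some g(x,n_i) with x g = x, g_x = n_i *)
  (forall x i, (Phi (weval nuc (h x i))).2 x = x /\
               (Phi (weval nuc (h x i))).1 x = nuc i) ->
  (* phi^un induces phi_1 : G_0 -> G_0 wr S_d *)
  (forall w w', g0eq Phi nuc idx h w w' ->
     wperm Phi nuc w = wperm Phi nuc w' /\
     forall x, g0eq Phi nuc idx h (wsec Phi nuc idx w x) (wsec Phi nuc idx w' x)) /\
  (* (G_0, phi_1) is contracting with nucleus the image of S *)
  g0_contracting_set Phi nuc idx h (Simg l) /\
  (forall M, g0_contracting_set Phi nuc idx h M ->
     forall s, List.In s (Simg l) -> exists m, List.In m M /\ g0eq Phi nuc idx h s m) /\
  (* (G_0, phi_1) is self-replicating *)
  (forall (g : word l) (x : 'I_d), exists k : word l,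
     wperm Phi nuc k x = x /\ g0eq Phi nuc idx h (wsec Phi nuc idx k x) g) /\
  (* pihat o phi_1 = Phi o pi *)
  (forall w : word l, (Phi (weval nuc w)).2 = wperm Phi nuc w /\
     forall x, (Phi (weval nuc w)).1 x = weval nuc (wsec Phi nuc idx w x)).
Proof.
move=> d_ge2 Phi_hom _ _ _ nuc_inj nuc_nucleus nuc_sect h_spec.
have x0 : 'I_d := Ordinal (leq_trans (isT : 0 < 2) d_ge2).
split.
  by move=> w w' eq_ww'; split; [exact: g0_wperm Phi_hom nuc_sect h_spec _ _ eq_ww' |
                                exact: g0_sec Phi_hom nuc_sect h_spec _ _ eq_ww'].
split; first exact: Simg_contracting Phi_hom nuc_sect h_spec x0 nuc_nucleus.
split; first exact: Simg_minimal nuc_sect nuc_inj nuc_nucleus.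
split; first exact: g0_self_replicating Phi_hom nuc_sect h_spec.
exact: pi_phi Phi_hom nuc_sect.
Qed.
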